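(* Let $f:\mathbb{R}^d\to\mathbb{R}$ be $L$-smooth (i.e. $\|\nabla f(\mathbf{x})-\nabla f(\mathbf{y})\|\le L\|\mathbf{x}-\mathbf{y}\|$ for all $\mathbf{x},\mathbf{y}$) with $f_*=\inf_{\mathbf{x}} f(\mathbf{x})>-\infty$. Let $T\ge1$, $\eta>0$, $0\le\lambda\le\frac{1}{2\eta T}$, let $\mathbf{x}_1$ satisfy $\|\mathbf{x}_1\|_\infty\le\eta$ and $f(\mathbf{x}_1)-f_*\le\Delta_f$, and let $\mathbf{v}_1,\dots,\mathbf{v}_T$ be arbitrary (possibly random) vectors in $\mathbb{R}^d$. Define $\mathbf{x}_{t+1}=\mathbf{x}_t-\eta(\operatorname{sign}(\mathbf{v}_t)+\lambda\mathbf{x}_t)$ for $t=1,\dots,T$. Then $$\mathbb{E}\left[\frac1T\sum_{t=1}^T\|\nabla f(\mathbf{x}_t)\|_1\right]\le \frac{2\Delta_f}{\eta T}+4\sqrt d\,\sqrt{\mathbb{E}\left[\frac1T\sum_{t=1}^T\|\nabla f(\mathbf{x}_t)-\mathbf{v}_t\|^2\right]}+4\eta L d .$$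
   Context: $\|\cdot\|$ is the Euclidean norm, $\|\cdot\|_1$ and $\|\cdot\|_\infty$ the $\ell_1$- and max-norms. $\operatorname{sign}$ is applied coordinatewise with values in $\{-1,0,1\}$. *)

From HB Require Import structures.
From mathcomp Require Import all_boot all_order all_algebra.
From mathcomp Require Import all_classical all_reals all_analysis.
Set Implicit Arguments. Unset Strict Implicit. Unset Printing Implicit Defensive.
Import Order.TTheory GRing.Theory Num.Theory.
Import numFieldNormedType.Exports.
Local Open Scope ring_scope.

Definition enorm (R : realType) (d : nat) (u : 'rV[R]_d) : R :=
  Num.sqrt (\sum_(i < d) u 0 i ^+ 2).

Definition l1norm (R : realType) (d : nat) (u : 'rV[R]_d) : R :=
  \sum_(i < d) `|u 0 i|.

Definition linfnorm (R : realType) (d : nat) (u : 'rV[R]_d) : R :=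
  \big[Num.max/0]_(i < d) `|u 0 i|.

Definition vsign (R : realType) (d : nat) (u : 'rV[R]_d) : 'rV[R]_d :=
  \row_(i < d) Num.sg (u 0 i).

Definition grad (R : realType) (d : nat) (f : 'rV[R]_d -> R) (x : 'rV[R]_d)
  : 'rV[R]_d :=
  \row_(i < d) ('d f x (delta_mx 0 i : 'rV[R]_d)).

From HB Require Import structures.
From mathcomp Require Import all_boot all_order all_algebra.
From mathcomp Require Import all_classical all_reals all_analysis.
From mathcomp Require Import ring lra measurable_realfun.
Set Implicit Arguments. Unset Strict Implicit. Unset Printing Implicit Defensive.
Import Order.TTheory GRing.Theory Num.Theory.
Import numFieldNormedType.Exports.
Local Open Scope classical_set_scope.
Local Open Scope ring_scope.

(* The weight decay keeps |lam x_t| <= 1/2, since each step moves a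
   coordinate by at most eta.  The step then has entries
   -eta (sign v_t + lam x_t), and the descent inequality of L-smooth functions
   gives
     f x_{t+1} <= f x_t - eta/2 |g_t|_1 + 2 eta |g_t - v_t|_1 + 9/8 L d eta^2
   with g_t = grad f x_t: a sign of v_t costs only where it disagrees with that
   of g_t, and there |g_t| <= |g_t - v_t|.  Telescoping bounds the average of
   |g_t|_1.  The bound |u|_1 <= sqrt d |u| <= sqrt d (|u|^2 / s + s) / 2 is
   affine in |u|^2, so it passes through the expectation, and optimizing over s
   yields the square root of the expected squared error.  Measurability holds
   because x_t only depends on finitely many sign patterns. *)

Lemma mxBE (V : zmodType) (m n : nat) (A B : 'M[V]_(m, n)) i j :
  (A - B) i j = A i j - B i j.
Proof. by rewrite !mxE. Qed.

Section EuclideanNorm.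
Variables (R : realType) (d : nat).
Implicit Types (u w : 'rV[R]_d).

Lemma enorm_sqr u : enorm u ^+ 2 = \sum_i u 0 i ^+ 2.
Proof. by rewrite sqr_sqrtr //; apply: sumr_ge0 => i _; exact: sqr_ge0. Qed.

Lemma enormZ (a : R) u : enorm (a *: u) = `|a| * enorm u.
Proof.
rewrite /enorm -sqrtr_sqr -sqrtrM ?sqr_ge0 // mulr_sumr.
by congr Num.sqrt; apply: eq_bigr => i _; rewrite mxE exprMn.
Qed.

(* Lagrange's identity: the sum of the squares (u_i w_j - u_j w_i)^2 is the
   gap in the Cauchy-Schwarz inequality. *)
Lemma dot_le_enorm u w : \sum_i u 0 i * w 0 i <= enorm u * enorm w.
Proof.
pose Y i j := u 0 i ^+ 2 * w 0 j ^+ 2.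
pose Z i j := (u 0 i * w 0 i) * (u 0 j * w 0 j).
have lagrange : \sum_i \sum_j (u 0 i * w 0 j - u 0 j * w 0 i) ^+ 2 =
    \sum_i \sum_j Y i j + \sum_i \sum_j Y j i - 2 * \sum_i \sum_j Z i j.
  rewrite mulr_sumr -big_split -sumrB /=; apply: eq_bigr => i _.
  rewrite mulr_sumr -big_split -sumrB /=; apply: eq_bigr => j _.
  by rewrite /Y /Z; ring.
have gap_ge0 : 0 <= \sum_i \sum_j (u 0 i * w 0 j - u 0 j * w 0 i) ^+ 2.
  by apply: sumr_ge0 => i _; apply: sumr_ge0 => j _; exact: sqr_ge0.
have sq_le : (\sum_i u 0 i * w 0 i) ^+ 2 <= enorm u ^+ 2 * enorm w ^+ 2.
  move: gap_ge0; rewrite lagrange (exchange_big _ _ _ _ _ (fun i j => Y j i)).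
  by rewrite !enorm_sqr big_distrlr expr2 big_distrlr /=; lra.
apply: le_trans (ler_norm _) _.
rewrite -ler_sqr ?nnegrE ?normr_ge0 ?mulr_ge0 ?sqrtr_ge0 //.
by rewrite real_normK ?num_real // exprMn.
Qed.

Lemma l1norm_le_enorm u : l1norm u <= Num.sqrt d%:R * enorm u.
Proof.
have := dot_le_enorm (\row_i `|u 0 i|) (const_mx 1).
have -> : enorm (const_mx 1 : 'rV[R]_d) = Num.sqrt d%:R.
  by rewrite /enorm; under eq_bigr do rewrite mxE expr1n; rewrite sumr_const card_ord.
have -> : enorm (\row_i `|u 0 i|) = enorm u.
  by rewrite /enorm; congr Num.sqrt; apply: eq_bigr => i _; rewrite mxE real_normK ?num_real.
rewrite mulrC; apply: le_trans.
by apply: ler_sum => i _; rewrite !mxE mulr1.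
Qed.

Lemma norm_entry_le_linfnorm u i : `|u 0 i| <= linfnorm u.
Proof. exact: (le_bigmax 0 (fun i => `|u 0 i|) i). Qed.

Lemma amgm_le (e s : R) : 0 < s -> e <= (e ^+ 2 / s + s) / 2.
Proof.
move=> s_gt0; rewrite -subr_ge0 -(pmulr_rge0 _ s_gt0).
have -> : s * ((e ^+ 2 / s + s) / 2 - e) = (e - s) ^+ 2 / 2 by field; rewrite gt_eqF.
by rewrite divr_ge0 ?sqr_ge0.
Qed.

Lemma avg_l1norm_le n (u : nat -> 'rV[R]_d) (s : R) : (1 <= n)%N -> 0 < s ->
  n%:R^-1 * \sum_(1 <= t < n.+1) l1norm (u t) <=
  Num.sqrt d%:R / 2 * ((n%:R^-1 * \sum_(1 <= t < n.+1) enorm (u t) ^+ 2) / s + s).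
Proof.
move=> n_ge1 s_gt0.
have pointwise t : l1norm (u t) <= Num.sqrt d%:R / 2 * (enorm (u t) ^+ 2 / s + s).
  apply: le_trans (l1norm_le_enorm _) _; rewrite mulrAC -mulrA.
  by rewrite ler_wpM2l ?sqrtr_ge0 // amgm_le.
have summed := @ler_sum_nat _ 1 n.+1 _ _ (fun t _ => pointwise t).
rewrite -mulr_sumr big_split /= -mulr_suml sumr_const_nat subn1 /= -[s *+ n]mulr_natr in summed.
have n_gt0 : 0 < n%:R :> R by rewrite ltr0n.
have ninv_ge0 : 0 <= n%:R^-1 :> R by rewrite invr_ge0 ltW.
apply: le_trans (ler_wpM2l ninv_ge0 summed) _.
by rewrite le_eqVlt; apply/orP; left; apply/eqP; field; rewrite !gt_eqF.
Qed.

Lemma lipschitz_const_ge0 (G : 'rV[R]_d -> 'rV[R]_d) (L : R) : (0 < d)%N ->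
  (forall x y, enorm (G x - G y) <= L * enorm (x - y)) -> 0 <= L.
Proof.
move=> d_gt0 G_lip; have := G_lip (const_mx 1) 0.
have -> : enorm ((const_mx 1 : 'rV[R]_d) - 0) = Num.sqrt d%:R.
  rewrite subr0 /enorm; under eq_bigr do rewrite mxE expr1n.
  by rewrite sumr_const card_ord.
have sqrt_d_gt0 : 0 < Num.sqrt (d%:R : R) by rewrite sqrtr_gt0 ltr0n.
by rewrite -(pmulr_lge0 _ sqrt_d_gt0); apply: le_trans; exact: sqrtr_ge0.
Qed.

End EuclideanNorm.

Section Descent.
Variables (R : realType) (d : nat) (f : 'rV[R]_d -> R) (L : R).
Implicit Types (x h : 'rV[R]_d) (s : R).
Hypothesis f_diff : forall x, differentiable f x.
Hypothesis f_smooth :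
  forall x y, enorm (grad f x - grad f y) <= L * enorm (x - y).

Lemma diff_gradE x h : 'd f x h = \sum_i grad f x 0 i * h 0 i.
Proof.
rewrite {1}(row_sum_delta h) linear_sum /=.
by apply: eq_bigr => i _; rewrite linearZ /= mxE mulrC.
Qed.

Lemma is_derive_line x h s :
  is_derive s 1 (fun s : R => f (s *: h + x)) ('d f (s *: h + x) h).
Proof.
have shift : (fun e : R => e^-1 *: (f ((e *: 1 + s) *: h + x) - f (s *: h + x)))
    = (fun e : R => e^-1 *: (f (e *: h + (s *: h + x)) - f (s *: h + x))).
  by apply/funext => e /=; rewrite [e *: 1]mulr1 scalerDl addrA.
have dfh : derivable f (s *: h + x) h by exact: diff_derivable.
apply: DeriveDef; first by rewrite /derivable shift.
by rewrite -deriveE // /derive shift.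
Qed.

(* Mean value theorem applied to
   psi s = f (x + s h) - s <grad f x, h> - s^2 L/2 |h|^2, whose derivative is
   <grad f (x + s h) - grad f x, h> - s L |h|^2 <= 0 for s >= 0. *)
Lemma smooth_descent x h :
  f (h + x) <= f x + \sum_i grad f x 0 i * h 0 i + L / 2 * enorm h ^+ 2.
Proof.
set c := \sum_i grad f x 0 i * h 0 i; set k := L / 2 * enorm h ^+ 2.
pose psi s := f (s *: h + x) - s * c - k * (s * s).
pose dpsi s := 'd f (s *: h + x) h - c - k * (s + s).
have psi_derive s : is_derive s 1 psi (dpsi s).
  have psi' := is_deriveB (is_deriveB (is_derive_line x h s)
    (is_deriveM (is_derive_id s 1) (is_derive_cst c s 1)))
    (is_deriveM (is_derive_cst k s 1)
      (is_deriveM (is_derive_id s 1) (is_derive_id s 1))).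
  apply: is_derive_eq.
  by rewrite !scaler0 !addr0 add0r /cst /GRing.scale /= !mulr1.
have psi_cont : {within `[0, 1], continuous psi}.
  apply: continuous_subspaceT => s; apply: differentiable_continuous.
  by apply/derivable1_diffP; have [] := psi_derive s.
have [xi xi01 psi10] := MVT ltr01 (fun s _ => psi_derive s) psi_cont.
have xi_ge0 : 0 <= xi by move: xi01; rewrite in_itv /= => /andP[/ltW].
have dpsi_le0 : dpsi xi <= 0.
  pose g := grad f (xi *: h + x) - grad f x.
  have dot_g : 'd f (xi *: h + x) h - c = \sum_i g 0 i * h 0 i.
    by rewrite diff_gradE /c -sumrB; apply: eq_bigr => i _; rewrite mxBE mulrBl.
  have g_le : enorm g <= L * (xi * enorm h).
    by have := f_smooth (xi *: h + x) x; rewrite addrK enormZ ger0_norm.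
  have := ler_wpM2r (sqrtr_ge0 _ : 0 <= enorm h) g_le.
  have := dot_le_enorm g h.
  have -> : L * (xi * enorm h) * enorm h = k * (xi + xi) by rewrite /k; field.
  by rewrite /dpsi dot_g; lra.
by move: psi10; rewrite /psi scale1r scale0r add0r subr0 mulr1; lra.
Qed.

End Descent.

Section SignStep.
Variable R : realType.
Implicit Types (eta lam g v a : R).

Lemma norm_sg_le1 (r : R) : `|Num.sg r| <= 1.
Proof. by rewrite normr_sg; case: (r != 0). Qed.

(* Where the signs of g and v differ, |g| <= |g - v|. *)
Lemma mulr_sg_ge g v : `|g| - 2 * `|g - v| <= g * Num.sg v.
Proof.
have gv_le := ler_norm (g - v).
have vg_le : v - g <= `|g - v| by rewrite distrC; exact: ler_norm.
case: (ltgtP v 0) => [v_lt0|v_gt0|->].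
- rewrite ltr0_sg // mulrN1.
  by case: (lerP 0 g) => g0; [rewrite ger0_norm | rewrite ltr0_norm]; lra.
- rewrite gtr0_sg // mulr1.
  by case: (lerP 0 g) => g0; [rewrite ger0_norm | rewrite ltr0_norm]; lra.
- by rewrite sgr0 mulr0 subr0 mulr2n; have := normr_ge0 g; lra.
Qed.

Lemma sign_step_dot eta lam g v a : 0 <= eta -> `|lam * a| <= 1 / 2 ->
  g * (- eta * (Num.sg v + lam * a)) <= - (eta / 2) * `|g| + 2 * eta * `|g - v|.
Proof.
move=> eta_ge0 decay_le.
have sg_ge := ler_wpM2l eta_ge0 (mulr_sg_ge g v).
have decay_ge : - (g * (lam * a)) <= `|g| / 2.
  apply: le_trans (ler_norm _) _; rewrite normrN normrM.
  by have := ler_wpM2l (normr_ge0 g) decay_le; rewrite mulrA mulr1.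
have := ler_wpM2l eta_ge0 decay_ge.
have -> : g * (- eta * (Num.sg v + lam * a)) =
  - (eta * (g * Num.sg v)) + eta * - (g * (lam * a)) by ring.
lra.
Qed.

Lemma sign_step_sqr eta lam v a : `|lam * a| <= 1 / 2 ->
  (- eta * (Num.sg v + lam * a)) ^+ 2 <= 9 / 4 * eta ^+ 2.
Proof.
move=> decay_le.
have step_le : `|Num.sg v + lam * a| <= 3 / 2.
  by apply: le_trans (ler_normD _ _) _; have := norm_sg_le1 v; lra.
rewrite exprMn sqrrN mulrC ler_wpM2r ?sqr_ge0 // -real_normK ?num_real //.
have -> : 9 / 4 = (3 / 2) ^+ 2 :> R by field.
by rewrite ler_sqr ?nnegrE.
Qed.

End SignStep.

Lemma sign_step_entry (R : realType) (d : nat) (X V : 'rV[R]_d) (eta lam : R) i :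
  (X - eta *: (vsign V + lam *: X)) 0 i =
  X 0 i - eta * (Num.sg (V 0 i) + lam * X 0 i).
Proof. by rewrite !mxE. Qed.

Section SignDescentPath.
Variables (R : realType) (d T : nat) (eta lam : R) (X V : nat -> 'rV[R]_d).
Hypotheses (T_ge1 : (1 <= T)%N) (eta_gt0 : 0 < eta) (lam_ge0 : 0 <= lam).
Hypothesis lam_le : lam <= (2 * eta * T%:R)^-1.
Hypothesis X1_le : linfnorm (X 1%N) <= eta.
Hypothesis X_rec : forall t, (1 <= t <= T)%N ->
  X t.+1 = X t - eta *: (vsign (V t) + lam *: X t).

Let lam_T_eta_le : lam * (T%:R * eta) <= 1 / 2.
Proof.
have T_eta_gt0 : 0 < 2 * eta * T%:R by rewrite !mulr_gt0 // ltr0n.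
have := ler_wpM2r (ltW T_eta_gt0) lam_le; rewrite mulVf ?gt_eqF //.
have -> : lam * (2 * eta * T%:R) = 2 * (lam * (T%:R * eta)) by ring.
lra.
Qed.

Lemma sign_iterate_entry_le t i : (1 <= t <= T.+1)%N -> `|X t 0 i| <= t%:R * eta.
Proof.
elim: t => [//|[|t] IH] /andP[_ t_le].
  by rewrite mul1r; apply: le_trans X1_le; exact: norm_entry_le_linfnorm.
have Xt_le := IH (ltnW t_le).
have eta_lam_le1 : eta * lam <= 1.
  have eta_le : eta <= T%:R * eta by rewrite ler_pMl // ler1n.
  by have := ler_wpM2l lam_ge0 eta_le; have := lam_T_eta_le; rewrite mulrC; lra.
rewrite X_rec // sign_step_entry.
have -> : X t.+1 0 i - eta * (Num.sg (V t.+1 0 i) + lam * X t.+1 0 i) =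
  (1 - eta * lam) * X t.+1 0 i + eta * - Num.sg (V t.+1 0 i) by ring.
apply: le_trans (ler_normD _ _) _.
rewrite !normrM normrN (ger0_norm (ltW eta_gt0)) ger0_norm; last lra.
have := ler_wpM2l (ltW eta_gt0) (norm_sg_le1 (V t.+1 0 i)).
have : (1 - eta * lam) * `|X t.+1 0 i| <= `|X t.+1 0 i|.
  by rewrite ler_piMl //; have := mulr_ge0 (ltW eta_gt0) lam_ge0; lra.
by rewrite -[t.+2]addn1 natrD; lra.
Qed.

Lemma sign_iterate_decay_le t i : (1 <= t <= T)%N -> `|lam * X t 0 i| <= 1 / 2.
Proof.
move=> /andP[t_ge1 t_le]; apply: le_trans lam_T_eta_le.
rewrite normrM ger0_norm // ler_wpM2l //.
apply: le_trans (sign_iterate_entry_le i _) _; first by rewrite t_ge1 ltnW.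
by rewrite ler_wpM2r ?ler_nat // ltW.
Qed.

Variables (f : 'rV[R]_d -> R) (L : R).
Hypothesis f_diff : forall x, differentiable f x.
Hypothesis f_smooth :
  forall x y, enorm (grad f x - grad f y) <= L * enorm (x - y).
Hypothesis L_ge0 : 0 <= L.

Lemma sign_descent_step t : (1 <= t <= T)%N ->
  eta / 2 * l1norm (grad f (X t)) <= f (X t) - f (X t.+1)
    + 2 * eta * l1norm (grad f (X t) - V t) + 9 / 8 * L * d%:R * eta ^+ 2.
Proof.
move=> t_in; set g := grad f (X t).
have h_entry i : (X t.+1 - X t) 0 i = - eta * (Num.sg (V t 0 i) + lam * X t 0 i).
  by rewrite mxBE X_rec // sign_step_entry; ring.
have decay i := sign_iterate_decay_le i t_in.
have dot_le : \sum_i g 0 i * (X t.+1 - X t) 0 i <=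
    - (eta / 2) * l1norm g + 2 * eta * l1norm (g - V t).
  rewrite /l1norm !mulr_sumr -big_split /=; apply: ler_sum => i _.
  by rewrite h_entry mxBE; exact: sign_step_dot (ltW eta_gt0) (decay i).
have sqr_le : enorm (X t.+1 - X t) ^+ 2 <= d%:R * (9 / 4 * eta ^+ 2).
  have -> : d%:R * (9 / 4 * eta ^+ 2) = \sum_(i < d) (9 / 4 * eta ^+ 2 : R).
    by rewrite sumr_const card_ord mulr_natl.
  rewrite enorm_sqr; apply: ler_sum => i _.
  by rewrite h_entry; exact: sign_step_sqr.
have := smooth_descent f_diff f_smooth (X t) (X t.+1 - X t); rewrite subrK -/g.
have := ler_wpM2l (divr_ge0 L_ge0 (ler0n R 2)) sqr_le.
have -> : L / 2 * (d%:R * (9 / 4 * eta ^+ 2)) = 9 / 8 * L * d%:R * eta ^+ 2 by field.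
lra.
Qed.

Lemma sign_descent_avg (Delta : R) : f (X 1%N) - f (X T.+1) <= Delta ->
  T%:R^-1 * \sum_(1 <= t < T.+1) l1norm (grad f (X t)) <=
  2 * Delta / (eta * T%:R)
  + 4 * (T%:R^-1 * \sum_(1 <= t < T.+1) l1norm (grad f (X t) - V t))
  + 9 / 4 * eta * L * d%:R.
Proof.
move=> Delta_ge.
set Sa := \sum_(1 <= t < T.+1) l1norm (grad f (X t)).
set Sb := \sum_(1 <= t < T.+1) l1norm (grad f (X t) - V t).
set C := 9 / 8 * L * d%:R * eta ^+ 2.
have telescoped :
    \sum_(1 <= t < T.+1) (f (X t) - f (X t.+1)) = f (X 1%N) - f (X T.+1).
  by under eq_bigr do rewrite -opprB; rewrite sumrN telescope_sumr // opprB.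
have summed := @ler_sum_nat _ 1 T.+1 _ _ (fun t t_in => sign_descent_step t_in).
rewrite -mulr_sumr 2!big_split /= -mulr_sumr telescoped sumr_const_nat subn1
  -[C *+ T]mulr_natl -/Sa -/Sb in summed.
have T_gt0 : 0 < T%:R :> R by rewrite ltr0n.
have Sa_le : Sa <= 2 / eta * (Delta + 2 * eta * Sb + T%:R * C).
  have -> : Sa = 2 / eta * (eta / 2 * Sa) by field; rewrite gt_eqF.
  by apply: ler_wpM2l; [rewrite divr_ge0 // ltW | lra].
have -> : 2 * Delta / (eta * T%:R) + 4 * (T%:R^-1 * Sb) + 9 / 4 * eta * L * d%:R
    = T%:R^-1 * (2 / eta * (Delta + 2 * eta * Sb + T%:R * C)).
  by rewrite /C; field; rewrite !gt_eqF.
by rewrite ler_wpM2l // invr_ge0 ltW.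
Qed.

Lemma sign_descent_avg_amgm (Delta s : R) :
  f (X 1%N) - f (X T.+1) <= Delta -> 0 < s ->
  T%:R^-1 * \sum_(1 <= t < T.+1) l1norm (grad f (X t)) <=
  (2 * Delta / (eta * T%:R) + 4 * eta * L * d%:R + 2 * Num.sqrt d%:R * s)
  + 2 * Num.sqrt d%:R / s
    * (T%:R^-1 * \sum_(1 <= t < T.+1) enorm (grad f (X t) - V t) ^+ 2).
Proof.
move=> Delta_ge s_gt0; apply: le_trans (sign_descent_avg Delta_ge) _.
set Z := T%:R^-1 * \sum_(1 <= t < T.+1) enorm (grad f (X t) - V t) ^+ 2.
have l1_le := avg_l1norm_le (fun t => grad f (X t) - V t) T_ge1 s_gt0.
rewrite -/Z in l1_le.
have amgm_split : 4 * (Num.sqrt d%:R / 2 * (Z / s + s)) =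
    2 * Num.sqrt d%:R * s + 2 * Num.sqrt d%:R / s * Z.
  by field; rewrite gt_eqF.
have := mulr_ge0 (mulr_ge0 (ltW eta_gt0) L_ge0) (ler0n R d).
have -> : 4 * eta * L * d%:R = 4 * (eta * L * d%:R) by ring.
have -> : 9 / 4 * eta * L * d%:R = 9 / 4 * (eta * L * d%:R) by ring.
lra.
Qed.

End SignDescentPath.

Section DiscreteMeasurable.
Variables (R : realType) (dO : measure_display) (Omega : measurableType dO).

(* Measurability for the discrete sigma-algebra on A.  The iterates are of
   this kind, being functions of the finitely many sign patterns of the v_t;
   hence no measurability of grad f is needed. *)
Definition discrete_measurable (A : Type) (g : Omega -> A) :=
  forall H : A -> R, measurable_fun setT (fun w => H (g w)).

Lemma eq_discrete_measurable (A : Type) (g1 g2 : Omega -> A) :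
  g1 =1 g2 -> discrete_measurable g1 -> discrete_measurable g2.
Proof. by move=> /funext <-. Qed.

Lemma discrete_measurable_cst (A : Type) (a : A) :
  discrete_measurable (fun _ => a).
Proof. by move=> H; exact: measurable_cst. Qed.

Lemma discrete_measurable_comp (A B : Type) (F : A -> B) (g : Omega -> A) :
  discrete_measurable g -> discrete_measurable (fun w => F (g w)).
Proof. by move=> mg H; exact: (mg (fun a => H (F a))). Qed.

Lemma discrete_measurable_pair_sg (A : Type) (g : Omega -> A) (u : Omega -> R) :
  discrete_measurable g -> measurable_fun setT u ->
  discrete_measurable (fun w => (g w, Num.sg (u w))).
Proof.
move=> mg mu H.
have indicator (b : Omega -> bool) : measurable_fun setT b ->
    measurable_fun setT (fun w => (b w)%:R : R).
  have b2R : measurable_fun setT (fun b : bool => b%:R : R) by move=> _ Y _.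
  by move=> mb; exact: measurableT_comp b2R mb.
have cmp (r : R) (c : Omega -> bool) : measurable_fun setT c ->
    measurable_fun setT (fun w => (c w)%:R * H (g w, r)).
  by move=> mc; apply: measurable_funM; [exact: indicator mc | exact: (mg (fun a => H (a, r)))].
have -> : (fun w => H (g w, Num.sg (u w))) = (fun w =>
    (0 < u w)%R%:R * H (g w, 1) + (u w < 0)%R%:R * H (g w, -1)
    + (u w == 0)%:R * H (g w, 0)).
  apply/funext => w; case: (ltgtP (u w) 0) => [u_lt0|u_gt0|->].
  - by rewrite ltr0_sg //= !(mul0r, mul1r, add0r, addr0).
  - by rewrite gtr0_sg //= !(mul0r, mul1r, add0r, addr0).
  - by rewrite sgr0 /= !(mul0r, mul1r, add0r, addr0).
apply: measurable_funD; first apply: measurable_funD; apply: cmp.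
- by apply: measurable_fun_ltr => //; exact: measurable_cst.
- by apply: measurable_fun_ltr => //; exact: measurable_cst.
- by apply: measurable_fun_eqr => //; exact: measurable_cst.
Qed.

Lemma discrete_measurable_pair_vsign (A : Type) (d : nat) (g : Omega -> A)
  (V : Omega -> 'rV[R]_d) :
  discrete_measurable g -> (forall i, measurable_fun setT (fun w => V w 0 i)) ->
  discrete_measurable (fun w => (g w, vsign (V w))).
Proof.
move=> mg mV.
suff partial (s : seq 'I_d) : discrete_measurable
    (fun w => (g w, \sum_(i <- s) Num.sg (V w 0 i) *: (delta_mx 0 i : 'rV[R]_d))).
  apply: eq_discrete_measurable _ (partial (index_enum 'I_d)) => w.
  rewrite [vsign _]row_sum_delta.
  by congr pair; apply: eq_bigr => i _; rewrite mxE.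
elim: s => [|i s IH].
  apply: eq_discrete_measurable _ (discrete_measurable_comp (fun a => (a, 0)) mg).
  by move=> w; rewrite big_nil.
apply: eq_discrete_measurable _ (discrete_measurable_comp
  (fun pc : A * 'rV[R]_d * R => (pc.1.1, pc.2 *: delta_mx 0 i + pc.1.2))
  (discrete_measurable_pair_sg IH (mV i))).
by move=> w; rewrite big_cons.
Qed.

Lemma discrete_measurable_iterate (d T : nat)
  (step : nat -> 'rV[R]_d -> 'rV[R]_d -> 'rV[R]_d) (x1 : 'rV[R]_d)
  (X V : nat -> Omega -> 'rV[R]_d) :
  (forall t i, measurable_fun setT (fun w => V t w 0 i)) ->
  (forall w, X 1%N w = x1) ->
  (forall t w, (1 <= t <= T)%N -> X t.+1 w = step t (X t w) (vsign (V t w))) ->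
  forall t, (1 <= t <= T.+1)%N -> discrete_measurable (X t).
Proof.
move=> mV X1 X_rec; elim=> [//|[|t] IH] /andP[_ t_le].
  by apply: eq_discrete_measurable _ (discrete_measurable_cst x1) => w; rewrite X1.
apply: eq_discrete_measurable _ (discrete_measurable_comp
  (fun p => step t.+1 p.1 p.2)
  (discrete_measurable_pair_vsign (IH (ltnW t_le)) (mV t.+1))).
by move=> w; rewrite (X_rec t.+1 w t_le).
Qed.

Lemma measurable_sum_nat (m n : nat) (F : nat -> Omega -> R) :
  (forall t, (m <= t < n)%N -> measurable_fun setT (F t)) ->
  measurable_fun setT (fun w => \sum_(m <= t < n) F t w).
Proof.
move=> mF.
have -> : (fun w => \sum_(m <= t < n) F t w) =
    (fun w => \sum_(t <- index_iota m n) if (m <= t < n)%N then F t w else 0).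
  apply/funext => w; rewrite big_nat_cond big_mkcond.
  by apply: eq_bigr => t _; rewrite andbT.
apply: measurable_sum => t.
by case t_in : (m <= t < n)%N; [exact: mF | exact: measurable_cst].
Qed.

Lemma measurable_enorm_sqr_sub (d : nat) (G : 'rV[R]_d -> 'rV[R]_d)
  (a b : Omega -> 'rV[R]_d) :
  discrete_measurable a -> (forall i, measurable_fun setT (fun w => b w 0 i)) ->
  measurable_fun setT (fun w => enorm (G (a w) - b w) ^+ 2).
Proof.
move=> ma mb.
have -> : (fun w => enorm (G (a w) - b w) ^+ 2) =
    (fun w => \sum_i (G (a w) 0 i - b w 0 i) ^+ 2).
  by apply/funext => w; rewrite enorm_sqr; apply: eq_bigr => i _; rewrite mxBE.
apply: measurable_sum => i; apply: measurable_funX; apply: measurable_funB.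
  exact: (ma (fun y => G y 0 i)).
exact: mb.
Qed.

End DiscreteMeasurable.

Lemma expectation_le_affine (R : realType) (dO : measure_display)
  (Omega : measurableType dO) (P : probability Omega R) (A Z : Omega -> R) (K c : R) :
  measurable_fun setT A -> measurable_fun setT Z ->
  (forall w, 0 <= A w) -> (forall w, 0 <= Z w) -> 0 <= K -> 0 <= c ->
  (forall w, A w <= K + c * Z w) ->
  ('E_P[A] <= K%:E + c%:E * 'E_P[Z])%E.
Proof.
move=> mA mZ A_ge0 Z_ge0 K_ge0 c_ge0 A_le.
have mcZ : measurable_fun setT (fun w => c%:E * (Z w)%:E)%E.
  by apply: emeasurable_funM; [exact: measurable_cst | apply/measurable_EFinP].
rewrite !unlock.
apply: (@le_trans _ _ (\int[P]_w (cst K%:E w + c%:E * (Z w)%:E))%E).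
  apply: ge0_le_integral => //.
  - by move=> w _; rewrite lee_fin.
  - exact/measurable_EFinP.
  - by apply: emeasurable_funD => //; exact: measurable_cst.
  - by move=> w _; rewrite -EFinM -EFinD lee_fin.
rewrite ge0_integralD //; last by move=> w _; rewrite -EFinM lee_fin mulr_ge0.
have := expectation_cst P K; rewrite unlock => ->.
rewrite ge0_integralZl_EFin //; first by move=> w _; rewrite lee_fin.
exact/measurable_EFinP.
Qed.

(* Choosing s = sqrt z (up to an arbitrarily small excess) balances
   c s and c z / s. *)
Lemma le_amgm_sqrte (R : realType) (a z : \bar R) (b c : R) :
  0 < c -> (0 <= z)%E ->
  (forall s : R, (0 < s)%R -> a <= (b + c * s)%:E + (c / s)%:E * z)%E ->
  (a <= b%:E + (2 * c)%:E * sqrte z)%E.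
Proof.
case: z => [r| |//] c_gt0 z_ge0 a_le; last first.
  by rewrite /= mulry gtr0_sg ?mul1e ?mulr_gt0 // addey // leey.
rewrite lee_fin in z_ge0; rewrite /= -EFinM -EFinD.
apply/lee_addgt0Pr => e e_gt0.
set q := Num.sqrt r; set s := q + e / c.
have q_ge0 : 0 <= q by exact: sqrtr_ge0.
have e_c_gt0 : 0 < e / c by rewrite divr_gt0.
have s_gt0 : 0 < s by rewrite /s; lra.
apply: le_trans (a_le s s_gt0) _; rewrite -EFinM -EFinD -EFinD lee_fin.
have r_div_le : r / s <= q.
  rewrite ler_pdivrMr // -[r]sqr_sqrtr // -/q /s mulrDr expr2.
  by have := mulr_ge0 q_ge0 (ltW e_c_gt0); lra.
have := ler_wpM2l (ltW c_gt0) r_div_le.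
have -> : c / s * r = c * (r / s) by ring.
have -> : c * s = c * q + e by rewrite /s mulrDr mulrCA divff ?mulr1 // gt_eqF.
lra.
Qed.

Lemma expectation_le_amgm (R : realType) (dO : measure_display)
  (Omega : measurableType dO) (P : probability Omega R) (A Z : Omega -> R) (b c : R) :
  measurable_fun setT A -> measurable_fun setT Z ->
  (forall w, 0 <= A w) -> (forall w, 0 <= Z w) -> 0 <= b -> 0 < c ->
  (forall s w, 0 < s -> A w <= b + c * s + c / s * Z w) ->
  ('E_P[A] <= b%:E + (2 * c)%:E * sqrte 'E_P[Z])%E.
Proof.
move=> mA mZ A_ge0 Z_ge0 b_ge0 c_gt0 A_le.
apply: le_amgm_sqrte => // [|s s_gt0]; first exact: expectation_ge0.
apply: expectation_le_affine => //.
- by rewrite addr_ge0 // mulr_ge0 // ltW.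
- by rewrite divr_ge0 // ltW.
- by move=> w; exact: A_le.
Qed.

Close Scope classical_set_scope.

Theorem mainTheorem2 (R : realType) (d : nat)
  (f : 'rV[R]_d -> R) (L : R)
  (f_diff : forall x, differentiable f x)
  (f_smooth : forall x y, enorm (grad f x - grad f y) <= L * enorm (x - y))
  (f_lb : exists m : R, forall x, m <= f x)
  (T : nat) (eta lam Delta : R)
  (hT : (1 <= T)%N) (heta : 0 < eta)
  (hlam0 : 0 <= lam) (hlam1 : lam <= (2 * eta * T%:R)^-1)
  (x1 : 'rV[R]_d)
  (hx1 : linfnorm x1 <= eta)
  (hDelta : f x1 - inf (range f) <= Delta)
  (dO : measure_display) (Omega : measurableType dO) (P : probability Omega R)
  (v : nat -> Omega -> 'rV[R]_d)
  (v_meas : forall t (i : 'I_d), measurable_fun setT (fun w => v t w 0 i))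
  (x : nat -> Omega -> 'rV[R]_d)
  (x_init : forall w, x 1%N w = x1)
  (x_rec : forall t w, (1 <= t <= T)%N ->
     x t.+1 w = x t w - eta *: (vsign (v t w) + lam *: x t w)) :
  ('E_P[fun w => (T%:R^-1 * \sum_(1 <= t < T.+1) l1norm (grad f (x t w)))%R]
   <= (2 * Delta / (eta * T%:R))%:E
      + (4 * Num.sqrt (d%:R))%:E
        * sqrte ('E_P[fun w => (T%:R^-1 *
              \sum_(1 <= t < T.+1) enorm (grad f (x t w) - v t w) ^+ 2)%R])
      + (4 * eta * L * d%:R)%:E)%E.
Proof.
have inf_le y : inf (range f) <= f y.
  have [m m_le] := f_lb.
  by apply: ge_inf; [exists m => _ [z _ <-] | exists y].
have Delta_ge w : f (x 1%N w) - f (x T.+1 w) <= Delta.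
  by have := inf_le (x T.+1 w); rewrite x_init; lra.
have Delta_ge0 : 0 <= Delta by have := inf_le x1; lra.
have eta_T_gt0 : 0 < eta * T%:R by rewrite mulr_gt0 ?ltr0n.
have Delta_term_ge0 : 0 <= 2 * Delta / (eta * T%:R).
  by rewrite divr_ge0 ?mulr_ge0 // ltW.
case: (posnP d) => [d0 | d_gt0].
  subst d; rewrite (_ : (fun w => _) = cst 0); last first.
    by apply/funext => w; rewrite big1 ?mulr0 // => t _; rewrite /l1norm big_ord0.
  by rewrite expectation_cst sqrtr0 mulr0 mul0e mulr0 adde0 addr0 lee_fin.
have L_ge0 := lipschitz_const_ge0 d_gt0 f_smooth.
have x_meas t : (1 <= t < T.+1)%N -> discrete_measurable R (x t).
  case/andP=> t_ge1 t_le; apply: (discrete_measurable_iterate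
    (step := fun _ y s => y - eta *: (s + lam *: y)) v_meas x_init x_rec).
  by rewrite t_ge1 ltnW.
have T_inv_ge0 : 0 <= T%:R^-1 :> R by rewrite invr_ge0 ler0n.
rewrite addeAC -EFinD (_ : 4 * _ = 2 * (2 * Num.sqrt d%:R)); last by ring.
apply: expectation_le_amgm.
- apply/measurable_funM/measurable_sum_nat => [|t /x_meas x_t_meas].
    exact: measurable_cst.
  exact: (x_t_meas (fun y => l1norm (grad f y))).
- apply/measurable_funM/measurable_sum_nat => [|t /x_meas x_t_meas].
    exact: measurable_cst.
  exact: measurable_enorm_sqr_sub x_t_meas (v_meas t).
- by move=> w; apply: mulr_ge0 => //; apply: sumr_ge0 => t _; apply: sumr_ge0.
- by move=> w; apply: mulr_ge0 => //; apply: sumr_ge0 => t _; exact: sqr_ge0.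
- by rewrite addr_ge0 // !mulr_ge0 // ltW.
- by rewrite mulr_gt0 // sqrtr_gt0 ltr0n.
- move=> s w s_gt0; have x1_le : linfnorm (x 1%N w) <= eta by rewrite x_init.
  exact: (sign_descent_avg_amgm hT heta hlam0 hlam1 x1_le (x_rec^~ w)
    f_diff f_smooth L_ge0 (Delta_ge w) s_gt0).
Qed.
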